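(* Let $\mathfrak K$ be a cone of $\mathbb R^d$-valued predictable $S$-integrable processes (i.e. $\vartheta\in\mathfrak K$, $c\ge 0$ imply $c\vartheta\in\mathfrak K$) such that $\vartheta\cdot S_T\in L^2(P)$ for all $\vartheta\in\mathfrak K$. Let $\tilde\varphi\in\mathfrak K$ be a solution of the problem $$\text{minimise } E\big[|1-\vartheta\cdot S_T|^2\big] \text{ over } \vartheta\in\mathfrak K,$$ and assume $\tilde\varphi\cdot S_T\not\equiv 1$ and $E[\tilde\varphi\cdot S_T]>0$. Then, for $\gamma>0$, the strategy $$\tilde\vartheta=\frac{1}{\gamma}\,\frac{1}{E[1-\tilde\varphi\cdot S_T]}\,\tilde\varphi$$ solves the problem: maximise $E[V_T(x,\vartheta)]-\frac{\gamma}{2}\mathrm{Var}[V_T(x,\vartheta)]$ over $\vartheta\in\mathfrak K$; and for $m>x$ the strategy $$\tilde\vartheta^{(m,x)}=\frac{m-x}{E[\tilde\varphi\cdot S_T]}\,\tilde\varphi$$ solves the problem: minimise $\mathrm{Var}[V_T(x,\vartheta)]$ subject to $E[V_T(x,\vartheta)]=m$ and $\vartheta\in\mathfrak K$.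
   Context: $(\Omega,\mathcal F,P)$ is a probability space with a filtration $(\mathcal F_t)_{0\le t\le T}$ satisfying the usual conditions, $T>0$ fixed. $S$ is an $\mathbb R^d$-valued RCLL semimartingale (discounted prices of $d$ risky assets; the riskless asset has price $1$). For $x\in\mathbb R$ and an $S$-integrable predictable $\vartheta$, $V_t(x,\vartheta):=x+\int_0^t\vartheta_u\,dS_u=x+\vartheta\cdot S_t$. *)

From HB Require Import structures.
From mathcomp Require Import all_boot all_order all_algebra.
From mathcomp Require Import all_classical all_reals all_analysis.
Set Implicit Arguments. Unset Strict Implicit. Unset Printing Implicit Defensive.
Import Order.TTheory GRing.Theory Num.Theory.
Local Open Scope ring_scope.

Definition expectR (R : realType) (d : measure_display) (T : measurableType d)
  (P : probability T R) (X : T -> R) : R :=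
  fine (\int[P]_w (X w)%:E).

Definition varianceR (R : realType) (d : measure_display) (T : measurableType d)
  (P : probability T R) (X : T -> R) : R :=
  expectR P (fun w => (X w - expectR P X) ^+ 2).

Definition inL2 (R : realType) (d : measure_display) (T : measurableType d)
  (P : probability T R) (X : T -> R) : Prop :=
  measurable_fun setT X /\ P.-integrable setT (fun w => (X w ^+ 2)%:E).

(* Terminal wealth V_T(x, theta) = x + theta . S_T, where [gain theta]
   stands for the terminal value theta . S_T of the stochastic integral. *)
Definition wealth (R : realType) (T : Type) (Theta : Type)
  (gain : Theta -> T -> R) (x : R) (th : Theta) : T -> R :=
  fun w => x + gain th w.

From HB Require Import structures.
From mathcomp Require Import all_boot all_order all_algebra.
From mathcomp Require Import all_classical all_reals all_analysis.
From mathcomp Require Import ring lra measurable_realfun.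
Import Order.TTheory GRing.Theory Num.Theory.
Local Open Scope ring_scope.
Local Open Scope classical_set_scope.

(* Every quantity in the theorem is a quadratic polynomial in the mean
   [mu th = E[th . S_T]] and the second moment [s th = E[(th . S_T)^2]], and
   along a ray of the cone [mu (c th) = c mu th], [s (c th) = c^2 s th].
   Minimising [E[(1 - c th . S_T)^2] = 1 - 2 c mu + c^2 s] over [c >= 0]
   gives [1 - mu^2 / s], so the optimality of [phi] forces
   [s phi = mu phi =: a] and, for every [th] with [mu th > 0], the Sharpe
   ratio bound [mu th ^+ 2 <= a * s th].  Both mean-variance problems reduce
   to this bound by elementary algebra; [a < 1] because [phi . S_T] is not
   a.s. equal to [1]. *)

Section Moments.
Context {R : realType} {d : measure_display} {T : measurableType d}
  {P : probability T R}.

Lemma inL2_integrable {g : T -> R} :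
  inL2 P g -> P.-integrable setT (fun w => (g w)%:E).
Proof.
move=> [mg ig2].
apply: (@le_integrable _ _ _ P setT measurableT _ (fun w => (1 + g w ^+ 2)%:E)).
- exact/measurable_EFinP.
- move=> w _ /=; rewrite lee_fin [X in _ <= X]ger0_norm ?addr_ge0 ?sqr_ge0 //.
  by case: (lerP 0 (g w)) => h; [rewrite ger0_norm | rewrite ltr0_norm]; nra.
- under eq_fun do rewrite EFinD.
  exact/integrableD/ig2/(finite_measure_integrable_cst P 1 measurableT).
Qed.

Section Quadratic.
Context {g : T -> R} (a b c : R).
Hypothesis g_L2 : inL2 P g.

Let quadraticE : (fun w => (a + b * g w + c * g w ^+ 2)%:E) =
  (fun w => a%:E + b%:E * (g w)%:E + c%:E * (g w ^+ 2)%:E)%E.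
Proof. by apply: funext => w; rewrite !EFinD !EFinM. Qed.

Let int_cst : P.-integrable setT (fun _ => a%:E).
Proof. exact: finite_measure_integrable_cst. Qed.

Let int_lin : P.-integrable setT (fun w => b%:E * (g w)%:E)%E.
Proof. exact/integrableZl/inL2_integrable. Qed.

Let int_sqr : P.-integrable setT (fun w => c%:E * (g w ^+ 2)%:E)%E.
Proof. by apply: integrableZl => //; case: g_L2. Qed.

Lemma integrable_quadratic :
  P.-integrable setT (fun w => (a + b * g w + c * g w ^+ 2)%:E).
Proof. by rewrite quadraticE; apply: integrableD => //; exact: integrableD. Qed.

Lemma expectR_quadratic :
  expectR P (fun w => a + b * g w + c * g w ^+ 2) =
  a + b * expectR P g + c * expectR P (fun w => g w ^+ 2).
Proof.
rewrite /expectR quadraticE integralD ?integralD //; last exact: integrableD.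
rewrite (integralZl _ (inL2_integrable g_L2)) // (integralZl _ g_L2.2) //.
rewrite integral_cst // -[X in (_ * X)%E]/(P setT) probability_setT mule1.
have fin_g := integrable_fin_num measurableT (inL2_integrable g_L2).
have fin_g2 := integrable_fin_num measurableT g_L2.2.
rewrite fineD ?fin_numD ?fin_numM // fineD ?fin_numM //.
by rewrite !fineM.
Qed.

End Quadratic.

Lemma expectR_ge0 (F : T -> R) : (forall w, 0 <= F w) -> 0 <= expectR P F.
Proof.
by move=> F_ge0; rewrite fine_ge0 // integral_ge0 // => w _; rewrite lee_fin.
Qed.

Lemma expectR_sqr_eq0_ae (h : T -> R) :
  P.-integrable setT (fun w => (h w ^+ 2)%:E) ->
  expectR P (fun w => h w ^+ 2) = 0 -> {ae P, forall w, h w = 0}.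
Proof.
move=> h2_int h2_eq0.
have int_abs0 : (\int[P]_(w in setT) `|(h w ^+ 2)%:E| = 0)%E.
  under eq_integral do rewrite gee0_abs ?lee_fin ?sqr_ge0 //.
  have := integrable_fin_num measurableT h2_int.
  by move: h2_eq0; rewrite /expectR => h2_eq0 fin_h2; rewrite -[LHS]fineK // h2_eq0.
have := (ae_eq_integral_abs P measurableT (measurable_int P h2_int)).1 int_abs0.
by apply: filterS => w /(_ I) /= [] /eqP; rewrite sqrf_eq0 => /eqP.
Qed.

End Moments.

Lemma sqr_le_of_ray_bound (R : realFieldType) (v mu s : R) : 0 < s ->
  v <= 1 - 2 * (mu / s * mu) + (mu / s) ^+ 2 * s -> mu ^+ 2 <= (1 - v) * s.
Proof.
move=> s_gt0; rewrite -ler_pdivrMr //.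
have -> : 1 - 2 * (mu / s * mu) + (mu / s) ^+ 2 * s = 1 - mu ^+ 2 / s.
  by field; rewrite gt_eqF.
by move=> opt; lra.
Qed.

Lemma mean_variance_bound (R : realFieldType) (gamma a k mu s : R) :
  0 < gamma -> 0 < a < 1 -> k * gamma * (1 - a) = 1 ->
  mu ^+ 2 <= s -> (0 < mu -> mu ^+ 2 <= a * s) ->
  mu - gamma / 2 * (s - mu ^+ 2) <= k * a - gamma / 2 * (k ^+ 2 * a - (k * a) ^+ 2).
Proof.
move=> gamma_gt0 /andP[a_gt0 a_lt1] kE var_ge0 sharpe.
have k_ge0 : 0 <= k.
  have : 0 < k * (gamma * (1 - a)) by rewrite mulrA kE ltr01.
  by rewrite pmulr_lgt0 ?mulr_gt0 ?subr_gt0 // => /ltW.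
have -> : gamma / 2 * (k ^+ 2 * a - (k * a) ^+ 2) = k * gamma * (1 - a) * (k * a) / 2.
  by ring.
rewrite kE mul1r.
have ka_ge0 : 0 <= k * a by rewrite mulr_ge0 // ltW.
have gvar_ge0 : 0 <= gamma / 2 * (s - mu ^+ 2).
  by rewrite mulr_ge0 ?subr_ge0 // divr_ge0 // ltW.
have [mu_le0 | mu_gt0] := lerP mu 0; first lra.
have {}sharpe : gamma * (mu ^+ 2 * (1 - a)) <= gamma * (a * (s - mu ^+ 2)).
  apply: ler_wpM2l; first exact: ltW.
  by rewrite !mulrBr mulr1 (mulrC (mu ^+ 2) a) lerD2r; exact: sharpe.
(* completing the square in [mu] around [a / (gamma (1 - a))] *)
have sq_ge0 : 0 <= k * (gamma * (1 - a) * mu - a) ^+ 2 by rewrite mulr_ge0 ?sqr_ge0.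
have sqE : k * (gamma * (1 - a) * mu - a) ^+ 2 = gamma * (1 - a) * mu ^+ 2
  * (k * gamma * (1 - a)) - 2 * a * mu * (k * gamma * (1 - a)) + k * a ^+ 2.
  by ring.
rewrite sqE kE !mulr1 in sq_ge0.
rewrite -(ler_pM2l a_gt0); lra.
Qed.

Section MeanVariance.
Context {R : realType} {d : measure_display} {T : measurableType d}
  {P : probability T R} {Theta : lmodType R} {gain : Theta -> T -> R}
  {K : set Theta}.
Hypothesis K_cone : forall th c, K th -> 0 <= c -> K (c *: th).
Hypothesis gainZ : forall th c, K th -> 0 <= c ->
  gain (c *: th) = (fun w => c * gain th w).
Hypothesis gain_L2 : forall th, K th -> inL2 P (gain th).

Let mu th := expectR P (gain th).
Let s th := expectR P (fun w => gain th w ^+ 2).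

Lemma expectR_wealth x {th} : K th -> expectR P (wealth gain x th) = x + mu th.
Proof.
move=> Kth.
rewrite (_ : wealth _ _ _ = fun w => x + 1 * gain th w + 0 * gain th w ^+ 2).
  by rewrite (expectR_quadratic _ _ _ (gain_L2 _ Kth)); rewrite /mu; ring.
by apply: funext => w; rewrite /wealth; ring.
Qed.

Lemma varianceR_wealth x {th} : K th ->
  varianceR P (wealth gain x th) = s th - mu th ^+ 2.
Proof.
move=> Kth; rewrite /varianceR expectR_wealth //.
rewrite (_ : (fun w => _) = fun w => mu th ^+ 2 + (- 2 * mu th) * gain th w
  + 1 * gain th w ^+ 2); last by apply: funext => w; rewrite /wealth; ring.
by rewrite (expectR_quadratic _ _ _ (gain_L2 _ Kth)); rewrite /s /mu; ring.
Qed.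

Lemma expectR_sqr_one_sub {th} : K th ->
  expectR P (fun w => (1 - gain th w) ^+ 2) = 1 - 2 * mu th + s th.
Proof.
move=> Kth.
rewrite (_ : (fun w => _) = fun w => 1 + (-2) * gain th w + 1 * gain th w ^+ 2).
  by rewrite (expectR_quadratic _ _ _ (gain_L2 _ Kth)); rewrite /mu /s; ring.
by apply: funext => w; ring.
Qed.

Lemma sqr_mean_le_moment {th} : K th -> mu th ^+ 2 <= s th.
Proof.
move=> Kth; rewrite -subr_ge0 -(varianceR_wealth 0 Kth).
by apply: expectR_ge0 => w; rewrite sqr_ge0.
Qed.

Lemma meanZ {th} c : K th -> 0 <= c -> mu (c *: th) = c * mu th.
Proof.
move=> Kth c_ge0; rewrite /mu gainZ //.
rewrite (_ : (fun w => _) = fun w => 0 + c * gain th w + 0 * gain th w ^+ 2).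
  by rewrite (expectR_quadratic _ _ _ (gain_L2 _ Kth)); ring.
by apply: funext => w; ring.
Qed.

Lemma momentZ {th} c : K th -> 0 <= c -> s (c *: th) = c ^+ 2 * s th.
Proof.
move=> Kth c_ge0; rewrite /s gainZ //.
rewrite (_ : (fun w => _) = fun w => 0 + 0 * gain th w + c ^+ 2 * gain th w ^+ 2).
  by rewrite (expectR_quadratic _ _ _ (gain_L2 _ Kth)); ring.
by apply: funext => w; ring.
Qed.

Context {phi : Theta}.
Hypothesis K_phi : K phi.
Hypothesis phi_opt : forall th, K th ->
  expectR P (fun w => (1 - gain phi w) ^+ 2)
    <= expectR P (fun w => (1 - gain th w) ^+ 2).
Hypothesis phi_mean_gt0 : 0 < mu phi.

Lemma sqr_mean_le_opt {th} : K th -> 0 < mu th ->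
  mu th ^+ 2 <= (2 * mu phi - s phi) * s th.
Proof.
move=> Kth mu_gt0.
have s_gt0 : 0 < s th.
  by apply: lt_le_trans (sqr_mean_le_moment Kth); rewrite exprn_gt0.
have c_ge0 : 0 <= mu th / s th by rewrite divr_ge0 // ltW.
have K_cth := K_cone _ _ Kth c_ge0.
have := phi_opt _ K_cth.
rewrite (expectR_sqr_one_sub K_phi) (expectR_sqr_one_sub K_cth).
rewrite meanZ // momentZ // => opt.
rewrite (_ : 2 * mu phi - s phi = 1 - (1 - 2 * mu phi + s phi)); last by ring.
exact: sqr_le_of_ray_bound s_gt0 opt.
Qed.

Lemma moment_opt : s phi = mu phi.
Proof.
have := sqr_mean_le_opt K_phi phi_mean_gt0.
rewrite -subr_ge0 (_ : _ - _ = - (mu phi - s phi) ^+ 2); last by ring.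
rewrite oppr_ge0 => h; apply/eqP; rewrite eq_sym -subr_eq0 -sqrf_eq0.
by rewrite eq_le h sqr_ge0.
Qed.

Lemma sqr_mean_le_mean_opt {th} : K th -> 0 < mu th ->
  mu th ^+ 2 <= mu phi * s th.
Proof.
move=> Kth mu_gt0; have := sqr_mean_le_opt Kth mu_gt0.
by rewrite moment_opt (_ : 2 * mu phi - mu phi = mu phi) //; ring.
Qed.

Hypothesis phi_not1 : ~ {ae P, forall w, gain phi w = 1}.

Lemma mean_opt_lt1 : mu phi < 1.
Proof.
have := sqr_mean_le_moment K_phi; rewrite moment_opt => h.
have mu_le1 : mu phi <= 1 by nra.
rewrite lt_neqAle mu_le1 andbT; apply/eqP => mu_eq1; apply: phi_not1.
have sq_int : P.-integrable setT (fun w => ((1 - gain phi w) ^+ 2)%:E).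
  rewrite (_ : (fun w => _) =
    fun w => (1 + (-2) * gain phi w + 1 * gain phi w ^+ 2)%:E).
    exact: integrable_quadratic (gain_L2 _ K_phi).
  by apply: funext => w; congr EFin; ring.
have := expectR_sqr_eq0_ae _ sq_int.
rewrite (expectR_sqr_one_sub K_phi) moment_opt mu_eq1 => /(_ ltac:(ring)).
by apply: filterS => w /eqP; rewrite subr_eq0 eq_sym => /eqP.
Qed.

Lemma mean_variance_opt gamma x : 0 < gamma ->
  let th1 := (gamma^-1 * (expectR P (fun w => 1 - gain phi w))^-1) *: phi in
  K th1 /\
  forall th, K th ->
    expectR P (wealth gain x th) - gamma / 2 * varianceR P (wealth gain x th)
      <= expectR P (wealth gain x th1)
         - gamma / 2 * varianceR P (wealth gain x th1).
Proof.
move=> gamma_gt0 th1.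
have one_sub_mu : expectR P (fun w => 1 - gain phi w) = 1 - mu phi.
  rewrite (_ : (fun w => _) = fun w => 1 + (-1) * gain phi w + 0 * gain phi w ^+ 2).
    by rewrite (expectR_quadratic _ _ _ (gain_L2 _ K_phi)); rewrite /mu; ring.
  by apply: funext => w; ring.
have mu_lt1 := mean_opt_lt1.
have k_ge0 : 0 <= gamma^-1 * (1 - mu phi)^-1.
  by rewrite mulr_ge0 // invr_ge0 ltW // subr_gt0.
have th1E : th1 = (gamma^-1 * (1 - mu phi)^-1) *: phi by rewrite /th1 one_sub_mu.
have K_th1 : K th1 by rewrite th1E; exact: K_cone.
split=> // th Kth; rewrite th1E in K_th1 *.
rewrite !expectR_wealth // !varianceR_wealth // meanZ // momentZ // moment_opt.
rewrite -!addrA lerD2l; apply: mean_variance_bound => //.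
- by rewrite phi_mean_gt0 mu_lt1.
- by field; rewrite !gt_eqF ?subr_gt0.
- exact: sqr_mean_le_moment.
- exact: sqr_mean_le_mean_opt.
Qed.

Lemma min_variance_opt x m : x < m ->
  let th2 := ((m - x) / expectR P (gain phi)) *: phi in
  [/\ K th2, expectR P (wealth gain x th2) = m &
  forall th, K th -> expectR P (wealth gain x th) = m ->
    varianceR P (wealth gain x th2) <= varianceR P (wealth gain x th)].
Proof.
move=> x_lt_m th2; rewrite -/(mu phi) in th2 *.
have k_ge0 : 0 <= (m - x) / mu phi by rewrite divr_ge0 ?subr_ge0 // ltW.
have k_def : (m - x) / mu phi * mu phi = m - x by rewrite divfK // gt_eqF.
have K_th2 : K th2 by exact: K_cone.
have mean_th2 : expectR P (wealth gain x th2) = m.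
  by rewrite expectR_wealth // meanZ // k_def; ring.
split=> // th Kth; rewrite expectR_wealth // => mean_th.
have mu_th : mu th = m - x by lra.
have sharpe : mu th ^+ 2 <= mu phi * s th.
  by apply: sqr_mean_le_mean_opt; rewrite // mu_th subr_gt0.
rewrite !varianceR_wealth // meanZ // momentZ // moment_opt k_def -mu_th lerD2r.
have -> : (mu th / mu phi) ^+ 2 * mu phi = mu th ^+ 2 / mu phi.
  by field; rewrite gt_eqF.
by rewrite ler_pdivrMr // mulrC.
Qed.

End MeanVariance.

Theorem lemma2p1 (R : realType) (d : measure_display) (T : measurableType d)
  (P : probability T R)
  (Theta : lmodType R)            (* S-integrable predictable processes *)
  (gain : Theta -> T -> R)        (* theta |-> theta . S_T *)
  (K : set Theta)
  (hK_cone : forall th c, K th -> 0 <= c -> K (c *: th))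
  (hgain_hom : forall th c, K th -> 0 <= c ->
      gain (c *: th) = (fun w => c * gain th w))
  (hK_L2 : forall th, K th -> inL2 P (gain th))
  (phi : Theta) (hphiK : K phi)
  (hphi_opt : forall th, K th ->
      expectR P (fun w => (1 - gain phi w) ^+ 2)
        <= expectR P (fun w => (1 - gain th w) ^+ 2))
  (hphi_not1 : ~ {ae P, forall w, gain phi w = 1})
  (hphi_pos : 0 < expectR P (gain phi)) :
  (forall (gamma x : R), 0 < gamma ->
     let th1 := (gamma^-1 * (expectR P (fun w => 1 - gain phi w))^-1) *: phi in
     K th1 /\
     forall th, K th ->
       expectR P (wealth gain x th) - gamma / 2 * varianceR P (wealth gain x th)
         <= expectR P (wealth gain x th1)
            - gamma / 2 * varianceR P (wealth gain x th1))
  /\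
  (forall (x m : R), x < m ->
     let th2 := ((m - x) / expectR P (gain phi)) *: phi in
     [/\ K th2, expectR P (wealth gain x th2) = m &
     forall th, K th -> expectR P (wealth gain x th) = m ->
       varianceR P (wealth gain x th2) <= varianceR P (wealth gain x th)]).
Proof.
split=> [gamma x gamma_gt0 | x m x_lt_m].
- exact: (mean_variance_opt hK_cone hgain_hom hK_L2 hphiK hphi_opt hphi_pos hphi_not1).
- exact: (min_variance_opt hK_cone hgain_hom hK_L2 hphiK hphi_opt hphi_pos).
Qed.
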